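(* The Cut Rule \[ \frac{\Gamma_1\Rightarrow \phi \qquad \Gamma_2,\phi \Rightarrow \Delta}{\Gamma_1,\Gamma_2 \Rightarrow \Delta} \] is admissible in the sequent calculus $\mathsf{G3iLL}$; that is, for all finite multisets of formulas $\Gamma_1,\Gamma_2$, every formula $\phi$ and every multiset $\Delta$ containing at most one formula, if $\Gamma_1\Rightarrow\phi$ and $\Gamma_2,\phi\Rightarrow\Delta$ are derivable in $\mathsf{G3iLL}$, then $\Gamma_1,\Gamma_2\Rightarrow\Delta$ is derivable in $\mathsf{G3iLL}$.
   Context: Formulas of the language of propositional Lax Logic are built from the constant $\bot$ and propositional atoms $p,q,\dots$ (with $\bot$ not an atom) using the binary connectives $\wedge,\vee,\to$ and a unary modal operator $\bigcirc$. A sequent is an expression $\Gamma\Rightarrow\Delta$ with $\Gamma,\Delta$ finite multisets of formulas and $\Delta$ containing at most one formula; $\Gamma,\Pi$ denotes multiset union. The calculus $\mathsf{G3iLL}$ has the axioms $\Gamma,p\Rightarrow p$ ($p$ an atom) and $\Gamma,\bot\Rightarrow\Delta$, and the rules (premisses / conclusion): $R\wedge$: $\Gamma\Rightarrow\phi$ and $\Gamma\Rightarrow\psi$ / $\Gamma\Rightarrow\phi\wedge\psi$; $L\wedge$: $\Gamma,\phi,\psi\Rightarrow\Delta$ / $\Gamma,\phi\wedge\psi\Rightarrow\Delta$; $R\vee$: $\Gamma\Rightarrow\phi_i$ / $\Gamma\Rightarrow\phi_0\vee\phi_1$ ($i=0,1$); $L\vee$: $\Gamma,\phi\Rightarrow\Delta$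 and $\Gamma,\psi\Rightarrow\Delta$ / $\Gamma,\phi\vee\psi\Rightarrow\Delta$; $R\to$: $\Gamma,\phi\Rightarrow\psi$ / $\Gamma\Rightarrow\phi\to\psi$; $L\to$: $\Gamma,\phi\to\psi\Rightarrow\phi$ and $\Gamma,\psi\Rightarrow\Delta$ / $\Gamma,\phi\to\psi\Rightarrow\Delta$; $R\bigcirc$: $\Gamma\Rightarrow\phi$ / $\Gamma\Rightarrow\bigcirc\phi$; $L\bigcirc$: $\Gamma,\psi\Rightarrow\bigcirc\phi$ / $\Gamma,\bigcirc\psi\Rightarrow\bigcirc\phi$. *)

From Stdlib Require Import List Permutation.
Import ListNotations.

Inductive form : Type :=
| Var : nat -> form
| Bot : form
| And : form -> form -> form
| Or  : form -> form -> form
| Imp : form -> form -> form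
| Circ : form -> form.

(* A sequent Gamma => Delta: Gamma a finite multiset (a list taken up to
   permutation, see [G3iLL_perm]); Delta has at most one formula (an option). *)
Inductive G3iLL : list form -> option form -> Prop :=
| G_perm : forall G G' D, Permutation G G' -> G3iLL G D -> G3iLL G' D
| G_ax   : forall G p, G3iLL (Var p :: G) (Some (Var p))
| G_bot  : forall G D, G3iLL (Bot :: G) D
| G_Rand : forall G a b, G3iLL G (Some a) -> G3iLL G (Some b) -> G3iLL G (Some (And a b))
| G_Land : forall G a b D, G3iLL (a :: b :: G) D -> G3iLL (And a b :: G) D
| G_Ror0 : forall G a b, G3iLL G (Some a) -> G3iLL G (Some (Or a b))
| G_Ror1 : forall G a b, G3iLL G (Some b) -> G3iLL G (Some (Or a b))
| G_Lor  : forall G a b D, G3iLL (a :: G) D -> G3iLL (b :: G) D -> G3iLL (Or a b :: G) D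
| G_Rimp : forall G a b, G3iLL (a :: G) (Some b) -> G3iLL G (Some (Imp a b))
| G_Limp : forall G a b D, G3iLL (Imp a b :: G) (Some a) -> G3iLL (b :: G) D ->
             G3iLL (Imp a b :: G) D
| G_Rcirc : forall G a, G3iLL G (Some a) -> G3iLL G (Some (Circ a))
| G_Lcirc : forall G a b, G3iLL (b :: G) (Some (Circ a)) -> G3iLL (Circ b :: G) (Some (Circ a)).

(** Cut is admissible by induction on the cut formula and then on the derivation of the right
    premise, along which the cut is permuted upwards; context formulas of the left premise are
    decomposed on the way by invertibility of the left rules. When the cut formula becomes principal on
    the right, the cut is permuted upwards through the left derivation instead, until the cut formula
    is introduced there by a right rule, and the cut is replaced by cuts on immediate subformulas.
    Invertibility is only ever applied to the derivation that is not the object of the current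
    induction, so no derivation heights are needed. *)

From Stdlib Require Import List Permutation Lia.
Import ListNotations.

Definition form_eq_dec (x y : form) : {x = y} + {x <> y}.
Proof. decide equality; apply PeanoNat.Nat.eq_dec. Qed.

(* Decides entailments between permutation statements by comparing multiplicities. *)
Ltac solve_perm :=
  repeat match goal with H : Permutation _ _ |- _ =>
    rewrite (Permutation_count_occ form_eq_dec) in H end;
  apply (Permutation_count_occ form_eq_dec);
  let y := fresh "y" in intro y;
  repeat match goal with H : forall x : form, count_occ _ _ x = count_occ _ _ x |- _ =>
    specialize (H y); revert H end;
  simpl; rewrite ?count_occ_app; simpl;
  repeat match goal with |- context [form_eq_dec ?a ?b] => destruct (form_eq_dec a b) end;
  intros; try congruence; lia.

Lemma Permutation_cons_cons_cases {A : Type} (x y : A) (G H : list A) :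
  Permutation (x :: G) (y :: H) ->
  (x = y /\ Permutation G H) \/
  (exists K, Permutation G (y :: K) /\ Permutation H (x :: K)).
Proof.
  intros HP.
  assert (Hy : In y (x :: G)) by (apply (Permutation_in _ (Permutation_sym HP)); left; auto).
  destruct Hy as [<- | Hy].
  - left. split; [reflexivity | exact (Permutation_cons_inv HP)].
  - right. apply in_split in Hy as (G1 & G2 & ->).
    exists (G1 ++ G2). split; [symmetry; apply Permutation_middle |].
    apply (Permutation_cons_inv (a := y)), (perm_trans (Permutation_sym HP)).
    symmetry; exact (Permutation_middle (x :: G1) G2 y).
Qed.

Lemma G3iLL_weaken (x : form) (G : list form) (D : option form) :
  G3iLL G D -> G3iLL (x :: G) D.
Proof.
  intros Hd; revert x; induction Hd; intros x.
  - apply (G_perm (x :: G)); [solve_perm | auto].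
  - apply (G_perm (Var p :: x :: G)); [solve_perm | apply G_ax].
  - apply (G_perm (Bot :: x :: G)); [solve_perm | apply G_bot].
  - apply G_Rand; auto.
  - apply (G_perm (And a b :: x :: G)); [solve_perm |].
    apply G_Land, (G_perm (x :: a :: b :: G)); [solve_perm | auto].
  - apply G_Ror0; auto.
  - apply G_Ror1; auto.
  - apply (G_perm (Or a b :: x :: G)); [solve_perm |].
    apply G_Lor; [apply (G_perm (x :: a :: G)) | apply (G_perm (x :: b :: G))]; auto; solve_perm.
  - apply G_Rimp, (G_perm (x :: a :: G)); [solve_perm | auto].
  - apply (G_perm (Imp a b :: x :: G)); [solve_perm |].
    apply G_Limp; [apply (G_perm (x :: Imp a b :: G)) | apply (G_perm (x :: b :: G))];
      auto; solve_perm.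
  - apply G_Rcirc; auto.
  - apply (G_perm (Circ b :: x :: G)); [solve_perm |].
    apply G_Lcirc, (G_perm (x :: b :: G)); [solve_perm | auto].
Qed.

Lemma G3iLL_weaken_app (H G : list form) (D : option form) :
  G3iLL G D -> G3iLL (H ++ G) D.
Proof. induction H as [| x H IH]; simpl; auto using G3iLL_weaken. Qed.

Lemma G3iLL_Bot_succ (G : list form) (D : option form) :
  G3iLL G (Some Bot) -> G3iLL G D.
Proof.
  intros Hd; remember (Some Bot) as E eqn:HE; revert D.
  induction Hd; intros D'; try discriminate.
  - apply (G_perm G); auto.
  - apply G_bot.
  - apply G_Land; auto.
  - apply G_Lor; auto.
  - apply G_Limp; auto.
Qed.

(* [left_premise A B]: some left rule with principal formula [A] has a premise whose context is that
   of the conclusion with [A] replaced by [B]; these are exactly the invertible premises. L○ is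
   invertible for every succedent, although it only applies to modal ones. *)
Inductive left_premise : form -> list form -> Prop :=
| left_premise_And a b : left_premise (And a b) [a; b]
| left_premise_Or0 a b : left_premise (Or a b) [a]
| left_premise_Or1 a b : left_premise (Or a b) [b]
| left_premise_Imp a b : left_premise (Imp a b) [b]
| left_premise_Circ a : left_premise (Circ a) [a].

Lemma G3iLL_inv_left (A : form) (B : list form) (R G : list form) (D : option form) :
  left_premise A B -> Permutation R (A :: G) -> G3iLL R D -> G3iLL (B ++ G) D.
Proof.
  intros HAB HR Hd; revert G HR; induction Hd; intros G0 HR;
    try destruct (Permutation_cons_cons_cases _ _ _ _ HR) as [[<- HG] | (K & HK & HG0)];
    try solve [inversion HAB].
  - apply IHHd; now transitivity G'.
  - apply (G_perm (Var p :: B ++ K)); [solve_perm | apply G_ax].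
  - apply (G_perm (Bot :: B ++ K)); [solve_perm | apply G_bot].
  - apply G_Rand; auto.
  - inversion HAB; subst; apply (G_perm (a :: b :: G)); [solve_perm | exact Hd].
  - apply (G_perm (And a b :: B ++ K)); [solve_perm |].
    apply G_Land, (G_perm (B ++ a :: b :: K)); [solve_perm | apply IHHd; solve_perm].
  - apply G_Ror0; auto.
  - apply G_Ror1; auto.
  - inversion HAB; subst; [apply (G_perm (a :: G)) | apply (G_perm (b :: G))]; auto; solve_perm.
  - apply (G_perm (Or a b :: B ++ K)); [solve_perm |].
    apply G_Lor.
    + apply (G_perm (B ++ a :: K)); [solve_perm | apply IHHd1; solve_perm].
    + apply (G_perm (B ++ b :: K)); [solve_perm | apply IHHd2; solve_perm].
  - apply G_Rimp, (G_perm (B ++ a :: G0)); [solve_perm | apply IHHd; solve_perm].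
  - inversion HAB; subst; apply (G_perm (b :: G)); [solve_perm | exact Hd2].
  - apply (G_perm (Imp a b :: B ++ K)); [solve_perm |].
    apply G_Limp.
    + apply (G_perm (B ++ Imp a b :: K)); [solve_perm | apply IHHd1; solve_perm].
    + apply (G_perm (B ++ b :: K)); [solve_perm | apply IHHd2; solve_perm].
  - apply G_Rcirc; auto.
  - inversion HAB; subst; apply (G_perm (b :: G)); [solve_perm | exact Hd].
  - apply (G_perm (Circ b :: B ++ K)); [solve_perm |].
    apply G_Lcirc, (G_perm (B ++ b :: K)); [solve_perm | apply IHHd; solve_perm].
Qed.

Lemma G3iLL_inv_left_in (A : form) (B X G : list form) (D : option form) :
  left_premise A B -> G3iLL (X ++ A :: G) D -> G3iLL (X ++ B ++ G) D.
Proof.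
  intros HAB Hd. apply (G_perm (B ++ X ++ G)); [solve_perm |].
  apply (G3iLL_inv_left A B (X ++ A :: G)); [exact HAB | solve_perm | exact Hd].
Qed.

Definition cut_admissible (phi : form) : Prop :=
  forall G D, G3iLL G (Some phi) -> G3iLL (phi :: G) D -> G3iLL G D.

Definition right_premises (G : list form) (phi : form) : Prop :=
  match phi with
  | Var p => In (Var p) G
  | Bot => False
  | And a b => G3iLL G (Some a) /\ G3iLL G (Some b)
  | Or a b => G3iLL G (Some a) \/ G3iLL G (Some b)
  | Imp a b => G3iLL (a :: G) (Some b)
  | Circ a => G3iLL G (Some a)
  end.

Section LeftCommutation.

Variables (phi : form) (D : option form) (Q : list form -> Prop).

Hypothesis Q_perm : forall G G', Permutation G G' -> Q G -> Q G'.
Hypothesis Q_inv_left : forall A B G, left_premise A B -> Q (A :: G) -> Q (B ++ G).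
(* L○ can only be permuted below the cut when the end succedent is modal. *)
Hypothesis D_modal : forall b, phi = Circ b -> exists e, D = Some (Circ e).
Hypothesis cut_right_rule : forall G, right_premises G phi -> Q G -> G3iLL G D.

Lemma cut_left_commute (G : list form) : G3iLL G (Some phi) -> Q G -> G3iLL G D.
Proof.
  intros Hd; remember (Some phi) as E eqn:HE; induction Hd; intros HQ.
  - apply (G_perm G); [exact H |].
    apply IHHd; [exact HE | apply (Q_perm G'); [symmetry |]; assumption].
  - injection HE as <-; apply cut_right_rule; [left |]; auto.
  - apply G_bot.
  - injection HE as <-; apply cut_right_rule; [split |]; auto.
  - apply G_Land, IHHd; [exact HE | exact (Q_inv_left _ _ _ (left_premise_And a b) HQ)].
  - injection HE as <-; apply cut_right_rule; [left |]; auto.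
  - injection HE as <-; apply cut_right_rule; [right |]; auto.
  - apply G_Lor; [apply IHHd1 | apply IHHd2]; auto.
    + exact (Q_inv_left _ _ _ (left_premise_Or0 a b) HQ).
    + exact (Q_inv_left _ _ _ (left_premise_Or1 a b) HQ).
  - injection HE as <-; apply cut_right_rule; auto.
  - apply G_Limp; [exact Hd1 |].
    apply IHHd2; [exact HE | exact (Q_inv_left _ _ _ (left_premise_Imp a b) HQ)].
  - injection HE as <-; apply cut_right_rule; auto.
  - destruct (D_modal a) as [e He]; [congruence |]. rewrite He in *.
    apply G_Lcirc, IHHd; [exact HE | exact (Q_inv_left _ _ _ (left_premise_Circ b) HQ)].
Qed.

End LeftCommutation.

Lemma cut_principal_And (a b : form) (G : list form) (D : option form) :
  cut_admissible a -> cut_admissible b ->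
  G3iLL G (Some (And a b)) -> G3iLL (a :: b :: G) D -> G3iLL G D.
Proof.
  intros cut_a cut_b.
  apply (cut_left_commute (And a b) D (fun G => G3iLL (a :: b :: G) D)).
  - intros G1 G2 HP; apply G_perm, (Permutation_app_head [a; b] HP).
  - intros A B G1 HAB; apply (G3iLL_inv_left_in A B [a; b] G1 D HAB).
  - discriminate.
  - intros G1 [Ha Hb] Hab.
    exact (cut_b G1 D Hb (cut_a (b :: G1) D (G3iLL_weaken b G1 _ Ha) Hab)).
Qed.

Lemma cut_principal_Or (a b : form) (G : list form) (D : option form) :
  cut_admissible a -> cut_admissible b ->
  G3iLL G (Some (Or a b)) -> G3iLL (a :: G) D -> G3iLL (b :: G) D -> G3iLL G D.
Proof.
  intros cut_a cut_b Hl Ha Hb.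
  apply (cut_left_commute (Or a b) D (fun G => G3iLL (a :: G) D /\ G3iLL (b :: G) D));
    [| | discriminate | | exact Hl | split; assumption].
  - intros G1 G2 HP [Ha1 Hb1]; split; apply (G_perm _ _ _ (perm_skip _ HP)); assumption.
  - intros A B G1 HAB [Ha1 Hb1]; split; apply (G3iLL_inv_left_in A B [_]); assumption.
  - intros G1 [Ha1 | Hb1] [Ha2 Hb2]; [exact (cut_a G1 D Ha1 Ha2) | exact (cut_b G1 D Hb1 Hb2)].
Qed.

Lemma cut_principal_Imp (a b : form) (G : list form) (D : option form) :
  cut_admissible a -> cut_admissible b ->
  G3iLL G (Some (Imp a b)) -> G3iLL G (Some a) -> G3iLL (b :: G) D -> G3iLL G D.
Proof.
  intros cut_a cut_b Hl Ha Hb.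
  apply (cut_left_commute (Imp a b) D (fun G => G3iLL G (Some a) /\ G3iLL (b :: G) D));
    [| | discriminate | | exact Hl | split; assumption].
  - intros G1 G2 HP [Ha1 Hb1]; split; [exact (G_perm _ _ _ HP Ha1) |].
    exact (G_perm _ _ _ (perm_skip _ HP) Hb1).
  - intros A B G1 HAB [Ha1 Hb1]; split;
      [apply (G3iLL_inv_left_in A B []) | apply (G3iLL_inv_left_in A B [_])]; assumption.
  - intros G1 Hab [Ha1 Hb1]. exact (cut_b G1 D (cut_a G1 _ Ha1 Hab) Hb1).
Qed.

Lemma cut_principal_Circ (b e : form) (G : list form) :
  cut_admissible b ->
  G3iLL G (Some (Circ b)) -> G3iLL (b :: G) (Some (Circ e)) -> G3iLL G (Some (Circ e)).
Proof.
  intros cut_b.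
  apply (cut_left_commute (Circ b) _ (fun G => G3iLL (b :: G) (Some (Circ e)))).
  - intros G1 G2 HP; apply G_perm, (perm_skip _ HP).
  - intros A B G1 HAB; apply (G3iLL_inv_left_in A B [b] G1 _ HAB).
  - eauto.
  - intros G1 Hb; exact (cut_b G1 _ Hb).
Qed.

Definition immediate_subformulas (phi : form) : list form :=
  match phi with
  | Var _ | Bot => []
  | And a b | Or a b | Imp a b => [a; b]
  | Circ a => [a]
  end.

Section CutStep.

Variable phi : form.
Hypothesis cut_sub : forall psi, In psi (immediate_subformulas phi) -> cut_admissible psi.

Lemma cut_right_commute (R G : list form) (D : option form) :
  G3iLL R D -> Permutation R (phi :: G) -> G3iLL G (Some phi) -> G3iLL G D.
Proof.
  intros Hd; revert G; induction Hd; intros G0 HR Hl;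
    try destruct (Permutation_cons_cons_cases _ _ _ _ HR) as [[<- HG] | (K & HK & HG0)].
  - apply IHHd; [now transitivity G' | exact Hl].
  - exact Hl.
  - apply (G_perm (Var p :: K)); [solve_perm | apply G_ax].
  - exact (G3iLL_Bot_succ _ _ Hl).
  - apply (G_perm (Bot :: K)); [solve_perm | apply G_bot].
  - apply G_Rand; auto.
  - apply (cut_principal_And a b); [apply cut_sub; simpl; auto .. | exact Hl |].
    apply (G_perm (a :: b :: G)); [solve_perm | exact Hd].
  - apply (G_perm (And a b :: K)); [solve_perm |].
    apply G_Land, IHHd; [solve_perm |].
    apply (G3iLL_inv_left (And a b) [a; b] G0); [constructor | exact HG0 | exact Hl].
  - apply G_Ror0; auto.
  - apply G_Ror1; auto.
  - apply (cut_principal_Or a b); [apply cut_sub; simpl; auto .. | exact Hl | |];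
      [apply (G_perm (a :: G)) | apply (G_perm (b :: G))]; auto; solve_perm.
  - apply (G_perm (Or a b :: K)); [solve_perm |].
    apply G_Lor; [apply IHHd1 | apply IHHd2]; try solve_perm.
    + apply (G3iLL_inv_left (Or a b) [a] G0); [constructor | exact HG0 | exact Hl].
    + apply (G3iLL_inv_left (Or a b) [b] G0); [constructor | exact HG0 | exact Hl].
  - apply G_Rimp, IHHd; [solve_perm | apply G3iLL_weaken, Hl].
  - apply (cut_principal_Imp a b); [apply cut_sub; simpl; auto .. | exact Hl | |].
    + (* the left premise of L→ still contains the cut formula *)
      apply IHHd1; [solve_perm | exact Hl].
    + apply (G_perm (b :: G)); [solve_perm | exact Hd2].
  - apply (G_perm (Imp a b :: K)); [solve_perm |].
    apply G_Limp; [apply IHHd1 | apply IHHd2]; try solve_perm.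
    + apply (G_perm G0); [exact HG0 | exact Hl].
    + apply (G3iLL_inv_left (Imp a b) [b] G0); [constructor | exact HG0 | exact Hl].
  - apply G_Rcirc; auto.
  - apply (cut_principal_Circ b a); [apply cut_sub; simpl; auto | exact Hl |].
    apply (G_perm (b :: G)); [solve_perm | exact Hd].
  - apply (G_perm (Circ b :: K)); [solve_perm |].
    apply G_Lcirc, IHHd; [solve_perm |].
    apply (G3iLL_inv_left (Circ b) [b] G0); [constructor | exact HG0 | exact Hl].
Qed.

Lemma cut_admissible_step : cut_admissible phi.
Proof.
  intros G D Hl Hr. exact (cut_right_commute (phi :: G) G D Hr (Permutation_refl _) Hl).
Qed.

End CutStep.

Theorem cut_admissible_all (phi : form) : cut_admissible phi.
Proof.
  induction phi; apply cut_admissible_step; simpl; intuition (subst; assumption).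
Qed.

Theorem mainTheorem1 (G1 G2 : list form) (phi : form) (D : option form) :
  G3iLL G1 (Some phi) -> G3iLL (phi :: G2) D -> G3iLL (G1 ++ G2) D.
Proof.
  intros Hl Hr. apply (cut_admissible_all phi).
  - apply (G_perm (G2 ++ G1)); [apply Permutation_app_comm | exact (G3iLL_weaken_app G2 G1 _ Hl)].
  - apply (G_perm (G1 ++ phi :: G2)); [solve_perm | exact (G3iLL_weaken_app G1 _ _ Hr)].
Qed.
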